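(* Let $n\ge 2$ and let $MAP_n^{2n-3}B$ be the set of $\lceil \log_2 n\rceil$ variables $move\text{-}L_1^{2^j-2}\text{-}L_1^{2^j-1}(2^j-1)$ for $j=1,\dots,\lceil\log_2 n\rceil$, where $L_1^0$ denotes $L^0$ (i.e. $move\text{-}L^0\text{-}L_1^1$ at step 1, $move\text{-}L_1^2\text{-}L_1^3$ at step 3, $move\text{-}L_1^6\text{-}L_1^7$ at step 7, $move\text{-}L_1^{14}\text{-}L_1^{15}$ at step 15, ...). Then $MAP_n^{2n-3}B$ is a backdoor for the CNF formula $MAP_n^{2n-3}$.
   Context: MAP planning domain. Fix $n\ge 2$. The map is an undirected graph with $3n-3$ nodes: a centre $L^0$; a path (branch 1) $L^0 - L_1^1 - \dots - L_1^{2n-3}$; and, for each $i=2,\dots,n$, a single node $L_i^1$ adjacent to $L^0$. Facts are $at\text{-}x$ and $visited\text{-}x$. For every edge $\{x,y\}$ and both orientations there is an action $move\text{-}x\text{-}y$ with precondition $\{at\text{-}x\}$, add effects $\{at\text{-}y, visited\text{-}y\}$, delete effect $\{at\text{-}x\}$. The initial state is $\{at\text{-}L^0\}$. The goal of $MAP_n^{2n-3}$ is $\{visited\text{-}L_1^{2n-3}, visited\text{-}L_2^1\}$. The CNF formula $MAP_n^{2n-3}$ is the standard Graphplan-based (Blackbox-style) SAT encoding of this task with $T=2n-2$ time steps (unsatisfiable, since a shortest plan has $2n-1$ steps). Build the Graphplan planning graph from the initial state, with a NOOP action $NOOP\text{-}p$ (precondition and add effect $\{p\}$) for each fact $p$.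 For each $t=1,\dots,T$ there is a variable $a(t)$ for every action $a$ (including NOOPs) in action layer $t$. Clauses: goal clauses $\{a(T): g\in add(a)\}$ for each goal $g$; precondition clauses $\{\neg a(t)\}\cup\{a'(t-1): p\in add(a')\}$ for each $a(t)$, $t\ge 2$, $p\in pre(a)$; mutex clauses $\{\neg a(t),\neg a'(t)\}$ for pairs of actions Graphplan marks mutually exclusive at layer $t$ (interference or competing needs); in particular any two move actions at the same step are mutually exclusive. For an unsatisfiable CNF $F$, a set $B$ of variables is a backdoor (with respect to unit propagation) if for every truth assignment to the variables in $B$, unit propagation on $F$ under that assignment derives the empty clause. *)

From Stdlib Require Import List Arith PeanoNat.
Import ListNotations.

(* L0 = centre L^0;  B1 k = L_1^k (branch 1, path node k);  Br i = L_i^1. *)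
Inductive node : Type := L0 | B1 (k : nat) | Br (i : nat).

Definition is_node (n : nat) (x : node) : Prop :=
  match x with
  | L0 => True
  | B1 k => 1 <= k <= 2 * n - 3
  | Br i => 2 <= i <= n
  end.

Definition edge (n : nat) (x y : node) : Prop :=
  (x = L0 /\ y = B1 1)
  \/ (exists k, 1 <= k /\ k + 1 <= 2 * n - 3 /\ x = B1 k /\ y = B1 (k + 1))
  \/ (exists i, 2 <= i <= n /\ x = L0 /\ y = Br i).

Definition adjacent (n : nat) (x y : node) : Prop := edge n x y \/ edge n y x.

Inductive fact : Type := At (x : node) | Visited (x : node).

Definition is_fact (n : nat) (p : fact) : Prop :=
  match p with At x => is_node n x | Visited x => is_node n x end.

Inductive action : Type := Move (x y : node) | Noop (p : fact).

Definition valid_action (n : nat) (a : action) : Prop :=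
  match a with
  | Move x y => adjacent n x y
  | Noop p => is_fact n p
  end.

Definition pre (a : action) : list fact :=
  match a with Move x _ => [At x] | Noop p => [p] end.
Definition add (a : action) : list fact :=
  match a with Move _ y => [At y; Visited y] | Noop p => [p] end.
Definition del (a : action) : list fact :=
  match a with Move x _ => [At x] | Noop _ => [] end.

Record layer : Type := mkLayer { lfacts : fact -> Prop; lmutex : fact -> fact -> Prop }.

Definition interferes (a b : action) : Prop :=
  exists p, In p (del a) /\ (In p (pre b) \/ In p (add b)).

Definition act_ok (n : nat) (L : layer) (a : action) : Prop :=
  valid_action n a
  /\ (forall p, In p (pre a) -> lfacts L p)
  /\ (forall p q, In p (pre a) -> In q (pre a) -> ~ lmutex L p q).

(* action mutex (interference or competing needs) in the action layer after L *)
Definition amutex_ok (n : nat) (L : layer) (a b : action) : Prop :=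
  a <> b /\ act_ok n L a /\ act_ok n L b /\
  (interferes a b \/ interferes b a
   \/ exists p q, In p (pre a) /\ In q (pre b) /\ lmutex L p q).

Definition next_facts (n : nat) (L : layer) (p : fact) : Prop :=
  exists a, act_ok n L a /\ In p (add a).

Definition next_layer (n : nat) (L : layer) : layer :=
  mkLayer (next_facts n L)
    (fun p q => p <> q /\ next_facts n L p /\ next_facts n L q /\
       forall a b, act_ok n L a -> act_ok n L b ->
         In p (add a) -> In q (add b) -> amutex_ok n L a b).

Fixpoint fact_layer (n t : nat) : layer :=
  match t with
  | 0 => mkLayer (fun p => p = At L0) (fun _ _ => False)
  | S t' => next_layer n (fact_layer n t')
  end.

Definition in_action_layer (n t : nat) (a : action) : Prop :=
  1 <= t /\ act_ok n (fact_layer n (t - 1)) a.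

Definition action_mutex (n t : nat) (a b : action) : Prop :=
  1 <= t /\ amutex_ok n (fact_layer n (t - 1)) a b.

Definition var : Type := (nat * action)%type.       (* a(t) = (t, a) *)
Definition lit : Type := (bool * var)%type.         (* (true,v) = v, (false,v) = ~v *)
Definition clause : Type := list lit.
Definition cnf : Type := clause -> Prop.

Definition neg (l : lit) : lit := (negb (fst l), snd l).

Inductive up_lit (F : cnf) (A : lit -> Prop) : lit -> Prop :=
| up_init l : A l -> up_lit F A l
| up_unit (C : clause) l : F C -> In l C ->
    (forall l', In l' C -> l' <> l -> up_lit F A (neg l')) -> up_lit F A l.

Definition up_conflict (F : cnf) (A : lit -> Prop) : Prop :=
  exists C, F C /\ forall l, In l C -> up_lit F A (neg l).

Definition is_backdoor (F : cnf) (B : list var) : Prop :=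
  forall sigma : var -> bool,
    up_conflict F (fun l => exists v, In v B /\ l = (sigma v, v)).

Definition horizon (n : nat) : nat := 2 * n - 2.
Definition goals (n : nat) : list fact := [Visited (B1 (2 * n - 3)); Visited (Br 2)].

Inductive MAP_formula (n : nat) : cnf :=
| goal_clause g (C : clause) :
    In g (goals n) ->
    (forall l, In l C <-> exists a, in_action_layer n (horizon n) a /\ In g (add a)
                                   /\ l = (true, (horizon n, a))) ->
    MAP_formula n C
| pre_clause t a p (C : clause) :
    2 <= t <= horizon n -> in_action_layer n t a -> In p (pre a) ->
    (forall l, In l C <-> l = (false, (t, a))
       \/ exists a', in_action_layer n (t - 1) a' /\ In p (add a')
                     /\ l = (true, (t - 1, a'))) ->
    MAP_formula n C
| mutex_clause t a b :
    1 <= t <= horizon n -> action_mutex n t a b ->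
    MAP_formula n [(false, (t, a)); (false, (t, b))].

Definition b1 (k : nat) : node := match k with 0 => L0 | _ => B1 k end.

Definition MAP_B (n : nat) : list var :=
  map (fun j => (2 ^ j - 1, Move (b1 (2 ^ j - 2)) (b1 (2 ^ j - 1))))
      (seq 1 (Nat.log2_up n)).

(* Only the last backdoor variable is needed: the move L_1^{s-1} -> L_1^s at step
   s = 2^ceil(log2 n) - 1, where n - 1 <= s <= 2n - 3.  Every action has a single
   precondition, any two moves at one step are mutex, and L_1^k is reachable no earlier
   than step k, so at step k the move L_1^{k-1} -> L_1^k is the only achiever of at-L_1^k.

   If the variable is true, unit propagation makes every earlier move along branch 1 true,
   which excludes every move into L_2^1 up to step s; after step s the agent is s steps
   away from L^0, and since 2s >= 2n - 2 it cannot reach L_2^1 before the horizon.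

   If it is false, no later move along branch 1 can happen at its earliest step, so the
   goal visited-L_1^{2n-3} forces the delayed moves L_1^{t-2} -> L_1^{t-1} at every step
   t > s.  They exclude every move into L_2^1 from step s + 1 on, and at step s + 1 the
   no-op on visited-L_2^1 competes with at-L_1^{s-1}, which cannot hold at step s together
   with visited-L_2^1.

   Either way no achiever of visited-L_2^1 survives at the horizon, and the goal clause
   becomes empty. *)

From Stdlib Require Import List Arith PeanoNat Lia Classical.
Import ListNotations.

Definition branch (x : node) : nat := match x with L0 => 0 | B1 _ => 1 | Br i => i end.
Definition depth (x : node) : nat := match x with L0 => 0 | B1 k => k | Br _ => 1 end.

(* Graph distance in the star of paths: along a common branch, or else through [L0]. *)
Definition dist (x y : node) : nat :=
  if branch x =? branch y then (depth x - depth y) + (depth y - depth x)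
  else depth x + depth y.

Lemma dist_adjacent n z x y : adjacent n x y -> dist z y <= dist z x + 1.
Proof.
  unfold adjacent, edge, dist; intros [H|H];
  destruct H as [[-> ->]|[[k [? [? [-> ->]]]]|[i [? [-> ->]]]]];
  destruct z; cbn [branch depth];
  repeat match goal with |- context [?a =? ?b] => destruct (Nat.eqb_spec a b) end; lia.
Qed.

Lemma dist_comm x y : dist x y = dist y x.
Proof. unfold dist; rewrite Nat.eqb_sym; destruct (branch y =? branch x); lia. Qed.

Lemma dist_refl x : dist x x = 0.
Proof. unfold dist; rewrite Nat.eqb_refl; lia. Qed.

Lemma dist_L0 x : dist L0 x = depth x.
Proof. destruct x as [|k|[|i]]; unfold dist; cbn [branch depth Nat.eqb]; lia. Qed.

Lemma dist_b1_Br k i : 2 <= i -> dist (b1 k) (Br i) = k + 1.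
Proof.
  intros Hi; destruct k; unfold dist; cbn [b1 branch depth];
  destruct (Nat.eqb_spec 0 i), (Nat.eqb_spec 1 i); lia.
Qed.

Lemma b1_pos k : 1 <= k -> b1 k = B1 k.
Proof. destruct k; [lia | reflexivity]. Qed.

Lemma adjacent_b1 n k : k + 1 <= 2 * n - 3 -> adjacent n (b1 k) (b1 (k + 1)).
Proof.
  intros Hk; left; destruct k as [|k]; [now left|].
  right; left; exists (S k); repeat split; lia.
Qed.

Lemma neighbours_B1 n u k : adjacent n u (B1 k) -> u = b1 (k - 1) \/ u = B1 (k + 1).
Proof.
  unfold adjacent, edge; intros [H|H];
  destruct H as [[H1 H2]|[[j [? [? [H1 H2]]]]|[i [? [H1 H2]]]]];
  try discriminate; subst.
  - injection H2 as ->; now left.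
  - injection H2 as ->; left; rewrite <- b1_pos by lia; f_equal; lia.
  - injection H1 as ->; now right.
Qed.

Definition fact_node (p : fact) : node := match p with At x | Visited x => x end.

Lemma adds_fact a p : In p (add a) -> a = Noop p \/ exists u, a = Move u (fact_node p).
Proof.
  destruct a as [u y|q]; simpl.
  - intros [<-|[<-|[]]]; right; now exists u.
  - intros [<-|[]]; now left.
Qed.

Lemma act_ok_pre n L a p : act_ok n L a -> In p (pre a) -> lfacts L p.
Proof. intros [_ [H _]]; auto. Qed.

Lemma fact_layer_depth n t p : lfacts (fact_layer n t) p -> depth (fact_node p) <= t.
Proof.
  revert p; induction t as [|t IH]; intros p Hp.
  - simpl in Hp; subst; reflexivity.
  - destruct Hp as [a [Ha Hadd]].
    destruct (adds_fact _ _ Hadd) as [->|[u ->]].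
    + assert (IHp := IH p (act_ok_pre _ _ _ _ Ha (or_introl eq_refl))); lia.
    + assert (IHu := IH (At u) (act_ok_pre _ _ _ _ Ha (or_introl eq_refl))).
      destruct Ha as [Hadj _].
      assert (Hd := dist_adjacent n L0 _ _ Hadj); rewrite !dist_L0 in Hd; simpl in *; lia.
Qed.

Lemma fact_mutex_irrefl n t p : ~ lmutex (fact_layer n t) p p.
Proof. destruct t; simpl; tauto. Qed.

(* Every action has a single precondition, so fact mutexes never exclude an action. *)
Lemma act_ok_intro n t a : valid_action n a ->
  (forall p, In p (pre a) -> lfacts (fact_layer n t) p) -> act_ok n (fact_layer n t) a.
Proof.
  intros Hv Hpre; repeat split; auto.
  intros p q Hp Hq; destruct a; simpl in Hp, Hq;
  destruct Hp as [<-|[]]; destruct Hq as [<-|[]]; apply fact_mutex_irrefl.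
Qed.

Lemma At_b1_in_fact_layer n t k : k <= t -> k <= 2 * n - 3 ->
  lfacts (fact_layer n t) (At (b1 k)).
Proof.
  revert k; induction t as [|t IH]; intros k Hkt Hkn.
  - replace k with 0 by lia; reflexivity.
  - destruct (Nat.eq_dec k (S t)) as [->|Hne].
    + exists (Move (b1 t) (b1 (t + 1))); split; [|rewrite Nat.add_1_r; now left].
      apply act_ok_intro; [apply adjacent_b1; lia|].
      intros p [<-|[]]; apply IH; lia.
    + exists (Noop (At (b1 k))); split; [|now left].
      apply act_ok_intro; [destruct k; simpl; lia|].
      intros p [<-|[]]; apply IH; lia.
Qed.

Definition at_exclusive (L : layer) : Prop :=
  forall x y, x <> y -> lfacts L (At x) -> lfacts L (At y) -> lmutex L (At x) (At y).

Lemma Move_amutex n L u x b z : at_exclusive L ->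
  act_ok n L (Move u x) -> act_ok n L b -> b <> Move u x -> pre b = [At z] ->
  amutex_ok n L (Move u x) b /\ amutex_ok n L b (Move u x).
Proof.
  intros Hex Ha Hb Hne Hpre.
  assert (Hu : lfacts L (At u)) by (apply (act_ok_pre _ _ _ _ Ha); now left).
  assert (Hz : lfacts L (At z)) by (apply (act_ok_pre _ _ _ _ Hb); rewrite Hpre; now left).
  destruct (classic (u = z)) as [<-|Huz];
    split; (split; [congruence | split; [auto | split; [auto|]]]).
  - left; exists (At u); rewrite Hpre; simpl; auto.
  - right; left; exists (At u); rewrite Hpre; simpl; auto.
  - right; right; exists (At u), (At z); rewrite Hpre; simpl; auto.
  - right; right; exists (At z), (At u); rewrite Hpre; simpl; auto.
Qed.

Lemma fact_layer_at_exclusive n t : at_exclusive (fact_layer n t).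
Proof.
  induction t as [|t IH]; intros x y Hxy Hx Hy.
  - simpl in *; congruence.
  - split; [congruence|]; split; [exact Hx|]; split; [exact Hy|].
    intros a b Ha Hb Hxa Hyb.
    destruct (adds_fact _ _ Hxa) as [->|[u ->]], (adds_fact _ _ Hyb) as [->|[v ->]];
      simpl fact_node in *.
    + split; [congruence|]; split; [exact Ha|]; split; [exact Hb|].
      right; right; exists (At x), (At y); simpl; split; [now left|]; split; [now left|].
      apply IH; auto; [apply (act_ok_pre _ _ _ _ Ha) | apply (act_ok_pre _ _ _ _ Hb)]; now left.
    + apply (proj2 (Move_amutex _ _ _ _ _ x IH Hb Ha ltac:(congruence) eq_refl)).
    + apply (proj1 (Move_amutex _ _ _ _ _ y IH Ha Hb ltac:(congruence) eq_refl)).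
    + apply (proj1 (Move_amutex _ _ _ _ _ v IH Ha Hb ltac:(congruence) eq_refl)).
Qed.

Lemma At_Visited_mutex n t x w :
  lfacts (fact_layer n t) (At x) -> lfacts (fact_layer n t) (Visited w) ->
  t <= dist w x -> lmutex (fact_layer n t) (At x) (Visited w).
Proof.
  revert x; induction t as [|t IH]; intros x Hx Hw Ht; [discriminate Hw|].
  assert (Hxw : x <> w) by (intros ->; rewrite dist_refl in Ht; lia).
  split; [discriminate|]; split; [exact Hx|]; split; [exact Hw|].
  intros a b Ha Hb Hxa Hwb.
  destruct (adds_fact _ _ Hxa) as [->|[u ->]], (adds_fact _ _ Hwb) as [->|[v ->]];
    simpl fact_node in *.
  - split; [discriminate|]; split; [exact Ha|]; split; [exact Hb|].
    right; right; exists (At x), (Visited w); simpl; split; [now left|]; split; [now left|].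
    apply IH; [apply (act_ok_pre _ _ _ _ Ha) | apply (act_ok_pre _ _ _ _ Hb) |]; simpl; auto; lia.
  - exact (proj2 (Move_amutex _ _ _ _ _ x (fact_layer_at_exclusive n t) Hb Ha
                    ltac:(congruence) eq_refl)).
  - split; [discriminate|]; split; [exact Ha|]; split; [exact Hb|].
    right; right; exists (At u), (Visited w); simpl; split; [now left|]; split; [now left|].
    assert (Hd := dist_adjacent n w _ _ (proj1 Ha)).
    apply IH; [apply (act_ok_pre _ _ _ _ Ha) | apply (act_ok_pre _ _ _ _ Hb) |]; simpl; auto; lia.
  - exact (proj2 (Move_amutex _ _ _ _ _ u (fact_layer_at_exclusive n t) Hb Ha
                    ltac:(congruence) eq_refl)).
Qed.

(* A finite superset of the nodes; the bound on branch 1 is loose because the edge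
   [L0]-[B1 1] exists for every [n]. *)
Definition node_list (n : nat) : list node :=
  L0 :: map B1 (seq 1 (2 * n + 1)) ++ map Br (seq 2 n).

Lemma adjacent_in_node_list n u y : adjacent n u y -> In u (node_list n).
Proof.
  unfold adjacent, edge, node_list; intros [H|H];
  destruct H as [[-> ->]|[[k [? [? [-> ->]]]]|[i [? [-> ->]]]]]; simpl; auto;
  right; apply in_or_app;
  first [ left; apply in_map, in_seq; lia | right; apply in_map, in_seq; lia ].
Qed.

Lemma filter_Prop {X : Type} (P : X -> Prop) (l : list X) :
  exists l', forall x, In x l' <-> In x l /\ P x.
Proof.
  induction l as [|y l [l' IH]]; [exists []; simpl; tauto|].
  destruct (classic (P y)) as [Hy|Hy]; [exists (y :: l') | exists l'];
    intros x; simpl; rewrite IH; intuition congruence.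
Qed.

Lemma achievers_list n t p :
  exists la, forall a, In a la <-> in_action_layer n t a /\ In p (add a).
Proof.
  destruct (filter_Prop (fun a => in_action_layer n t a /\ In p (add a))
              (Noop p :: map (fun u => Move u (fact_node p)) (node_list n))) as [la Hla].
  exists la; intros a; rewrite Hla; split; [tauto|].
  intros [Ha Hp]; split; [|auto].
  destruct (adds_fact _ _ Hp) as [->|[u ->]]; [now left|].
  right; apply (in_map (fun u => Move u (fact_node p))).
  exact (adjacent_in_node_list _ _ _ (proj1 (proj2 Ha))).
Qed.

Section Propagation.

Variables (n : nat) (A : lit -> Prop).

Local Notation up := (up_lit (MAP_formula n) A).

Definition achievers_false (t : nat) (p : fact) : Prop :=
  forall a, in_action_layer n t a -> In p (add a) -> up (false, (t, a)).

Lemma pre_clause_ex t a p : 2 <= t <= horizon n -> in_action_layer n t a -> In p (pre a) ->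
  exists C, MAP_formula n C /\ forall l, In l C <-> l = (false, (t, a))
    \/ exists a', in_action_layer n (t - 1) a' /\ In p (add a') /\ l = (true, (t - 1, a')).
Proof.
  intros Ht Ha Hp; destruct (achievers_list n (t - 1) p) as [la Hla].
  assert (HC : forall l, In l ((false, (t, a)) :: map (fun a' => (true, (t - 1, a'))) la)
     <-> l = (false, (t, a))
         \/ exists a', in_action_layer n (t - 1) a' /\ In p (add a') /\ l = (true, (t - 1, a'))).
  { intros l; simpl; rewrite in_map_iff; split.
    - intros [<-|[a' [<- H]]]; [now left|right; exists a'; apply Hla in H; tauto].
    - intros [<-|[a' [H1 [H2 ->]]]]; [now left|right; exists a'; rewrite Hla; tauto]. }
  eexists; split; [eapply pre_clause; eauto | exact HC].
Qed.

Lemma goal_clause_ex g : In g (goals n) ->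
  exists C, MAP_formula n C /\ forall l, In l C <->
    exists a, in_action_layer n (horizon n) a /\ In g (add a) /\ l = (true, (horizon n, a)).
Proof.
  intros Hg; destruct (achievers_list n (horizon n) g) as [la Hla].
  assert (HC : forall l, In l (map (fun a => (true, (horizon n, a))) la) <->
     exists a, in_action_layer n (horizon n) a /\ In g (add a) /\ l = (true, (horizon n, a))).
  { intros l; rewrite in_map_iff; split.
    - intros [a [<- H]]; exists a; apply Hla in H; tauto.
    - intros [a [H1 [H2 ->]]]; exists a; rewrite Hla; tauto. }
  eexists; split; [eapply goal_clause; eauto | exact HC].
Qed.

Lemma up_false_of_pre t a p : 2 <= t <= horizon n -> in_action_layer n t a -> In p (pre a) ->
  achievers_false (t - 1) p -> up (false, (t, a)).
Proof.
  intros Ht Ha Hp Hach; destruct (pre_clause_ex t a p Ht Ha Hp) as [C [HF HC]].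
  apply (up_unit _ _ C); [exact HF | apply HC; now left|].
  intros l Hl Hne; apply HC in Hl as [->|[a' [H1 [H2 ->]]]]; [congruence|].
  now apply Hach.
Qed.

Lemma up_true_of_pre t a p b : 2 <= t <= horizon n -> in_action_layer n t a -> In p (pre a) ->
  up (true, (t, a)) -> in_action_layer n (t - 1) b -> In p (add b) ->
  (forall a', in_action_layer n (t - 1) a' -> In p (add a') -> a' <> b ->
     up (false, (t - 1, a'))) ->
  up (true, (t - 1, b)).
Proof.
  intros Ht Ha Hp Hup Hb Hpb Hothers; destruct (pre_clause_ex t a p Ht Ha Hp) as [C [HF HC]].
  apply (up_unit _ _ C); [exact HF | apply HC; right; eauto|].
  intros l Hl Hne; apply HC in Hl as [->|[a' [H1 [H2 ->]]]]; [exact Hup|].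
  apply Hothers; congruence.
Qed.

Lemma up_false_of_mutex t a b : 1 <= t <= horizon n -> action_mutex n t a b ->
  up (true, (t, a)) -> up (false, (t, b)).
Proof.
  intros Ht Hab Ha; apply (up_unit _ _ [(false, (t, a)); (false, (t, b))]).
  - now apply mutex_clause.
  - simpl; auto.
  - intros l [<-|[<-|[]]] Hne; [exact Ha | congruence].
Qed.

Lemma up_true_of_goal g b : In g (goals n) -> in_action_layer n (horizon n) b -> In g (add b) ->
  (forall a', in_action_layer n (horizon n) a' -> In g (add a') -> a' <> b ->
     up (false, (horizon n, a'))) ->
  up (true, (horizon n, b)).
Proof.
  intros Hg Hb Hgb Hothers; destruct (goal_clause_ex g Hg) as [C [HF HC]].
  apply (up_unit _ _ C); [exact HF | apply HC; eauto|].
  intros l Hl Hne; apply HC in Hl as [a' [H1 [H2 ->]]].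
  apply Hothers; congruence.
Qed.

Lemma up_conflict_of_goal g : In g (goals n) -> achievers_false (horizon n) g ->
  up_conflict (MAP_formula n) A.
Proof.
  intros Hg Hach; destruct (goal_clause_ex g Hg) as [C [HF HC]].
  exists C; split; [exact HF|].
  intros l Hl; apply HC in Hl as [a [H1 [H2 ->]]]; now apply Hach.
Qed.

Lemma achievers_false_Visited w t0 : 1 <= t0 ->
  (forall t u, t0 <= t <= horizon n -> in_action_layer n t (Move u w) ->
     up (false, (t, Move u w))) ->
  (in_action_layer n t0 (Noop (Visited w)) -> up (false, (t0, Noop (Visited w)))) ->
  forall t, t0 <= t <= horizon n -> achievers_false t (Visited w).
Proof.
  intros Ht0 Hmove Hnoop t [Hle Ht] a Ha Hadd.
  destruct (adds_fact _ _ Hadd) as [->|[u ->]]; [|apply Hmove; auto].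
  induction Hle as [|t Hle IH]; [now apply Hnoop|].
  apply (up_false_of_pre _ _ (Visited w)); [lia | exact Ha | now left|].
  replace (S t - 1) with t by lia.
  intros a' Ha' Hadd'.
  destruct (adds_fact _ _ Hadd') as [->|[u ->]]; [|apply Hmove; auto; lia].
  apply IH; [lia | exact Ha'].
Qed.

End Propagation.

Lemma Move_action_mutex n t u x b z : in_action_layer n t (Move u x) -> in_action_layer n t b ->
  b <> Move u x -> pre b = [At z] -> action_mutex n t (Move u x) b.
Proof.
  intros [Ht Ha] [_ Hb] Hne Hz; split; [exact Ht|].
  exact (proj1 (Move_amutex _ _ _ _ _ _ (fact_layer_at_exclusive _ _) Ha Hb Hne Hz)).
Qed.

Definition advance (k : nat) : action := Move (b1 (k - 1)) (b1 k).

Lemma advance_in_layer n k t : 1 <= k <= t -> k <= 2 * n - 3 -> in_action_layer n t (advance k).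
Proof.
  intros Hk Hkn; split; [lia|]; apply act_ok_intro.
  - simpl; replace k with (k - 1 + 1) at 2 by lia; apply adjacent_b1; lia.
  - intros p [<-|[]]; apply At_b1_in_fact_layer; lia.
Qed.

Lemma Move_into_B1_early n t u k :
  in_action_layer n t (Move u (B1 k)) -> t <= k + 1 -> u = b1 (k - 1).
Proof.
  intros [_ Ha] Htk.
  assert (Hu := fact_layer_depth _ _ _ (act_ok_pre _ _ _ (At u) Ha (or_introl eq_refl))).
  destruct (neighbours_B1 _ _ _ (proj1 Ha)) as [Hu1|Hu1]; subst u; [reflexivity|].
  simpl in Hu; lia.
Qed.

Lemma achiever_b1_earliest n k p a : 1 <= k -> fact_node p = b1 k ->
  in_action_layer n k a -> In p (add a) -> a = advance k.
Proof.
  intros Hk Hp Ha Hadd; rewrite b1_pos in Hp by lia.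
  destruct (adds_fact _ _ Hadd) as [->|[u ->]].
  - destruct Ha as [_ Ha].
    assert (Hd := fact_layer_depth _ _ _ (act_ok_pre _ _ _ p Ha (or_introl eq_refl))).
    rewrite Hp in Hd; simpl in Hd; lia.
  - rewrite Hp in *; unfold advance.
    rewrite (Move_into_B1_early _ _ _ _ Ha ltac:(lia)), (b1_pos k) by lia; reflexivity.
Qed.

Lemma achiever_b1_next n k p a : 1 <= k -> fact_node p = b1 k ->
  in_action_layer n (k + 1) a -> In p (add a) -> a = advance k \/ a = Noop p.
Proof.
  intros Hk Hp Ha Hadd; rewrite b1_pos in Hp by lia.
  destruct (adds_fact _ _ Hadd) as [->|[u ->]]; [now right|left].
  rewrite Hp in *; unfold advance.
  rewrite (Move_into_B1_early _ _ _ _ Ha (le_n _)), (b1_pos k) by lia; reflexivity.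
Qed.

Lemma nat_down_ind (P : nat -> Prop) lo hi :
  P hi -> (forall k, lo <= k < hi -> P (k + 1) -> P k) -> forall k, lo <= k <= hi -> P k.
Proof.
  intros Hhi Hstep k Hk; replace k with (hi - (hi - k)) by lia.
  assert (Hd : hi - k <= hi - lo) by lia; revert Hd.
  induction (hi - k) as [|d IH]; intros Hd; [now rewrite Nat.sub_0_r|].
  apply Hstep; [lia|].
  replace (hi - S d + 1) with (hi - d) by lia; apply IH; lia.
Qed.

Section Backdoor.

Variables (n : nat) (A : lit -> Prop).
Hypothesis hn : 2 <= n.

Local Notation up := (up_lit (MAP_formula n) A).
Local Notation m := (2 * n - 3).

Lemma horizon_eq : horizon n = m + 1.
Proof. unfold horizon; lia. Qed.

Lemma up_false_of_advance t k b z : 1 <= k <= t -> k <= m -> t <= horizon n ->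
  up (true, (t, advance k)) -> in_action_layer n t b -> b <> advance k -> pre b = [At z] ->
  up (false, (t, b)).
Proof.
  intros Hk Hkm Ht Hup Hb Hne Hz.
  apply (up_false_of_mutex _ _ t (advance k)); [lia| |exact Hup].
  exact (Move_action_mutex _ _ _ _ _ _ (advance_in_layer _ _ _ Hk Hkm) Hb Hne Hz).
Qed.

Lemma up_true_advance_pred k : 1 <= k -> k + 1 <= m ->
  up (true, (k + 1, advance (k + 1))) -> up (true, (k, advance k)).
Proof.
  intros Hk Hkm Hup; replace k with (k + 1 - 1) at 1 by lia.
  apply (up_true_of_pre _ _ _ (advance (k + 1)) (At (b1 k))); auto.
  - rewrite horizon_eq; lia.
  - apply advance_in_layer; lia.
  - unfold advance; simpl; left; do 2 f_equal; lia.
  - replace (k + 1 - 1) with k by lia; apply advance_in_layer; lia.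
  - now left.
  - replace (k + 1 - 1) with k by lia; intros a Ha Hadd Hne.
    now rewrite (achiever_b1_earliest _ _ (At (b1 k)) _ Hk eq_refl Ha Hadd) in Hne.
Qed.

Lemma up_false_advance_succ k : 1 <= k -> k + 1 <= m ->
  up (false, (k, advance k)) -> up (false, (k + 1, advance (k + 1))).
Proof.
  intros Hk Hkm Hup.
  apply (up_false_of_pre _ _ _ _ (At (b1 k))).
  - rewrite horizon_eq; lia.
  - apply advance_in_layer; lia.
  - unfold advance; simpl; left; do 2 f_equal; lia.
  - replace (k + 1 - 1) with k by lia; intros a Ha Hadd.
    now rewrite (achiever_b1_earliest _ _ (At (b1 k)) _ Hk eq_refl Ha Hadd).
Qed.

Lemma up_conflict_of_Br2_blocked t0 : 1 <= t0 <= horizon n ->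
  (forall t u, t0 <= t <= horizon n -> in_action_layer n t (Move u (Br 2)) ->
     up (false, (t, Move u (Br 2)))) ->
  (in_action_layer n t0 (Noop (Visited (Br 2))) -> up (false, (t0, Noop (Visited (Br 2))))) ->
  up_conflict (MAP_formula n) A.
Proof.
  intros Ht0 Hmove Hnoop.
  apply (up_conflict_of_goal _ _ (Visited (Br 2))); [simpl; auto|].
  apply (achievers_false_Visited _ _ _ t0); auto; lia.
Qed.

Section AdvanceTrue.

Variable s : nat.
Hypothesis hs : n - 1 <= s <= m.
Hypothesis hadv : up (true, (s, advance s)).

Lemma up_true_advance_before k : 1 <= k <= s -> up (true, (k, advance k)).
Proof.
  apply (nat_down_ind (fun k => up (true, (k, advance k))) 1 s hadv).
  intros j Hj; apply up_true_advance_pred; lia.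
Qed.

Lemma achievers_false_At_far d x : s + d <= m -> d < dist (b1 s) x ->
  achievers_false n A (s + d) (At x).
Proof.
  revert x; induction d as [|d IH]; intros x Hd Hx a Ha Hadd.
  - rewrite Nat.add_0_r in *.
    assert (Hxs : x <> b1 s) by (intros ->; rewrite dist_refl in Hx; lia).
    destruct (adds_fact _ _ Hadd) as [->|[u ->]].
    + apply (up_false_of_advance _ s _ x); auto; try discriminate; rewrite ?horizon_eq; lia.
    + apply (up_false_of_advance _ s _ u); auto; rewrite ?horizon_eq; try lia.
      intros E; injection E as _ E; contradiction.
  - replace (s + S d) with (s + d + 1) in * by lia.
    assert (Hpre : 2 <= s + d + 1 <= horizon n) by (rewrite horizon_eq; lia).
    destruct (adds_fact _ _ Hadd) as [->|[u ->]].
    + apply (up_false_of_pre _ _ _ _ (At x)); [exact Hpre | exact Ha | now left|].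
      replace (s + d + 1 - 1) with (s + d) by lia; apply IH; lia.
    + apply (up_false_of_pre _ _ _ _ (At u)); [exact Hpre | exact Ha | now left|].
      replace (s + d + 1 - 1) with (s + d) by lia; apply IH; [lia|].
      assert (H := dist_adjacent n (b1 s) _ _ (proj1 (proj2 Ha))); simpl in H; lia.
Qed.

Lemma up_false_Move_Br2 t u : 1 <= t <= horizon n -> in_action_layer n t (Move u (Br 2)) ->
  up (false, (t, Move u (Br 2))).
Proof.
  intros Ht Hmove; destruct (Nat.le_gt_cases t s) as [Hts|Hst].
  - apply (up_false_of_advance _ t _ u); auto; try lia.
    + now apply up_true_advance_before.
    + intros E; injection E as _ E; destruct t; discriminate.
  - (* the agent stands at L_1^s at step s, and 2s >= 2n-2 leaves no time to get back
       to L^0 before the horizon *)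
    rewrite horizon_eq in Ht.
    apply (up_false_of_pre _ _ _ _ (At u)); [rewrite horizon_eq; lia | exact Hmove | now left|].
    replace (t - 1) with (s + (t - 1 - s)) by lia.
    apply achievers_false_At_far; [lia|].
    assert (H := dist_adjacent n (b1 s) _ _ (proj1 (proj2 Hmove))).
    rewrite dist_b1_Br in H; lia.
Qed.

Lemma up_conflict_of_advance_true : up_conflict (MAP_formula n) A.
Proof.
  apply (up_conflict_of_Br2_blocked 1); [rewrite horizon_eq; lia | |].
  - intros t u Ht; apply up_false_Move_Br2; lia.
  - intros [_ [_ [Hvis _]]]; discriminate (Hvis _ (or_introl eq_refl)).
Qed.

End AdvanceTrue.

Lemma advance_Noop_Visited_mutex k : 1 <= k <= m ->
  in_action_layer n (k + 1) (Noop (Visited (Br 2))) ->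
  action_mutex n (k + 1) (advance k) (Noop (Visited (Br 2))).
Proof.
  intros Hk [Ht Hnoop]; split; [exact Ht|].
  assert (Hadv : in_action_layer n (k + 1) (advance k)) by (apply advance_in_layer; lia).
  destruct Hadv as [_ Hadv].
  split; [discriminate|]; split; [exact Hadv|]; split; [exact Hnoop|].
  right; right; exists (At (b1 (k - 1))), (Visited (Br 2)).
  split; [now left|]; split; [now left|].
  replace (k + 1 - 1) with k in * by lia.
  apply At_Visited_mutex;
    [apply (act_ok_pre _ _ _ _ Hadv) | apply (act_ok_pre _ _ _ _ Hnoop) |]; simpl; auto.
  rewrite dist_comm, dist_b1_Br; lia.
Qed.

Section AdvanceFalse.

Variable s : nat.
Hypothesis hs : 1 <= s <= m.
Hypothesis hadv : up (false, (s, advance s)).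

Lemma achievers_false_b1_from k p : s <= k <= m -> fact_node p = b1 k ->
  achievers_false n A k p.
Proof.
  intros [Hsk Hkm] Hp a Ha Hadd.
  rewrite (achiever_b1_earliest _ k _ _ ltac:(lia) Hp Ha Hadd); clear a Ha Hadd Hp.
  induction Hsk as [|k Hsk IH]; [exact hadv|].
  rewrite <- Nat.add_1_r; apply up_false_advance_succ; [lia | lia | apply IH; lia].
Qed.

Lemma up_true_last_advance : up (true, (horizon n, advance m)).
Proof.
  assert (Hm : b1 m = B1 m) by (apply b1_pos; lia).
  apply (up_true_of_goal _ _ (Visited (b1 m))).
  - left; now rewrite Hm.
  - apply advance_in_layer; rewrite ?horizon_eq; lia.
  - simpl; auto.
  - rewrite horizon_eq; intros a Ha Hadd Hne.
    destruct (achiever_b1_next _ m (Visited (b1 m)) _ ltac:(lia) eq_refl Ha Hadd)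
      as [->| ->]; [easy|].
    apply (up_false_of_pre _ _ _ _ (Visited (b1 m)));
      [rewrite horizon_eq; lia | exact Ha | now left|].
    replace (m + 1 - 1) with m by lia; apply achievers_false_b1_from; [lia | reflexivity].
Qed.

Lemma up_true_delayed_advance_pred k : s + 1 <= k <= m ->
  up (true, (k + 1, advance k)) -> up (true, (k, advance (k - 1))).
Proof.
  intros Hk Hup; replace k with (k + 1 - 1) at 1 by lia.
  apply (up_true_of_pre _ _ _ (advance k) (At (b1 (k - 1)))); auto.
  - rewrite horizon_eq; lia.
  - apply advance_in_layer; lia.
  - now left.
  - apply advance_in_layer; lia.
  - unfold advance; simpl; auto.
  - replace (k + 1 - 1) with (k - 1 + 1) by lia; intros a Ha Hadd Hne.
    destruct (achiever_b1_next _ (k - 1) (At (b1 (k - 1))) _ ltac:(lia) eq_refl Ha Hadd)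
      as [->| ->]; [easy|].
    apply (up_false_of_pre _ _ _ _ (At (b1 (k - 1))));
      [rewrite horizon_eq; lia | exact Ha | now left|].
    replace (k - 1 + 1 - 1) with (k - 1) by lia; apply achievers_false_b1_from; [lia | reflexivity].
Qed.

Lemma up_true_delayed_advance t : s + 1 <= t <= m + 1 -> up (true, (t, advance (t - 1))).
Proof.
  apply (nat_down_ind (fun t => up (true, (t, advance (t - 1)))) (s + 1) (m + 1)).
  - rewrite Nat.add_sub, <- horizon_eq; exact up_true_last_advance.
  - intros k Hk; rewrite Nat.add_sub; apply up_true_delayed_advance_pred; lia.
Qed.

Lemma up_conflict_of_advance_false : up_conflict (MAP_formula n) A.
Proof.
  apply (up_conflict_of_Br2_blocked (s + 1)); [rewrite horizon_eq; lia | |].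
  - intros t u Ht Hmove; rewrite horizon_eq in Ht.
    apply (up_false_of_advance _ (t - 1) _ u); rewrite ?horizon_eq; try lia; auto.
    + apply up_true_delayed_advance; lia.
    + intros E; injection E as _ E; destruct (t - 1); discriminate.
  - intros Hnoop; apply (up_false_of_mutex _ _ _ (advance s)); [rewrite horizon_eq; lia | |].
    + now apply advance_Noop_Visited_mutex.
    + replace s with (s + 1 - 1) at 2 by lia; apply up_true_delayed_advance; lia.
Qed.

End AdvanceFalse.

End Backdoor.

Lemma log2_up_window n : 2 <= n -> n - 1 <= 2 ^ Nat.log2_up n - 1 <= 2 * n - 3.
Proof.
  intros hn; destruct (Nat.log2_up_spec n ltac:(lia)) as [Hlo Hhi].
  assert (Hpos : 0 < Nat.log2_up n) by (apply Nat.log2_up_pos; lia).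
  assert (Hdouble : 2 ^ Nat.log2_up n = 2 * 2 ^ Nat.pred (Nat.log2_up n)).
  { rewrite <- Nat.pow_succ_r', Nat.succ_pred_pos; auto. }
  lia.
Qed.

Lemma advance_in_MAP_B n j : 1 <= j <= Nat.log2_up n ->
  In (2 ^ j - 1, advance (2 ^ j - 1)) (MAP_B n).
Proof.
  intros Hj; apply in_map_iff; exists j; split; [|apply in_seq; lia].
  unfold advance; replace (2 ^ j - 1 - 1) with (2 ^ j - 2) by lia; reflexivity.
Qed.

Theorem theorem9 (n : nat) (hn : 2 <= n) : is_backdoor (MAP_formula n) (MAP_B n).
Proof.
  intros sigma.
  set (s := 2 ^ Nat.log2_up n - 1).
  assert (Hs : n - 1 <= s <= 2 * n - 3) by exact (log2_up_window n hn).
  assert (Hin : In (s, advance s) (MAP_B n)).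
  { apply advance_in_MAP_B; split; [apply Nat.log2_up_pos; lia | reflexivity]. }
  assert (Hassigned : up_lit (MAP_formula n) (fun l => exists v, In v (MAP_B n) /\ l = (sigma v, v))
                        (sigma (s, advance s), (s, advance s)))
    by (apply up_init; eauto).
  destruct (sigma (s, advance s)).
  - exact (up_conflict_of_advance_true n _ hn s Hs Hassigned).
  - exact (up_conflict_of_advance_false n _ hn s ltac:(lia) Hassigned).
Qed.
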